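(* Let $a,b>0$ with $a\ne b$ and $\nu\in(0,1)$. Then $$\widetilde r(\nu)\big(\sqrt a-\sqrt b\big)^2\le a\nabla_\nu b-L_\nu(a,b)\le \widetilde R(\nu)\big(\sqrt a-\sqrt b\big)^2$$ and $$K(a,b)^{\widetilde r(\nu)}\,a\sharp_\nu b\le I_\nu(a,b)\le K(a,b)^{\widetilde R(\nu)}\,a\sharp_\nu b .$$
   Context: $a\nabla_\nu b:=(1-\nu)a+\nu b$, $a\sharp_\nu b:=a^{1-\nu}b^\nu$. Weighted logarithmic mean: $L_\nu(a,b):=\frac{1}{\log a-\log b}\left\{\frac{1-\nu}{\nu}(a-a^{1-\nu}b^\nu)+\frac{\nu}{1-\nu}(a^{1-\nu}b^\nu-b)\right\}$. Kantorovich constant: $K(a,b):=\frac{(a+b)^2}{4ab}$. Weighted identric mean: $$I_\nu(a,b):=\frac1e\,\big(a\nabla_\nu b\big)^{\frac{(1-2\nu)(a\nabla_\nu b)}{\nu(1-\nu)(b-a)}}\left(\frac{b^{\frac{\nu b}{1-\nu}}}{a^{\frac{(1-\nu)a}{\nu}}}\right)^{\frac{1}{b-a}}.$$ For $\lambda\in[0,1]$ let $r_1(\lambda)=\min\{\nu\lambda,1-\nu\lambda\}$, $r_2(\lambda)=\min\{(1-\nu)\lambda,1-(1-\nu)\lambda\}$, $R_1(\lambda)=\max\{\nu\lambda,1-\nu\lambda\}$, $R_2(\lambda)=\max\{(1-\nu)\lambda,1-(1-\nu)\lambda\}$, and $\widetilde r(\nu):=\int_0^1((1-\nu)r_1(\lambda)+\nu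 r_2(\lambda))d\lambda$, $\widetilde R(\nu):=\int_0^1((1-\nu)R_1(\lambda)+\nu R_2(\lambda))d\lambda$. *)

From Stdlib Require Import Reals.
From Coquelicot Require Import Coquelicot.
Open Scope R_scope.

Definition wam (nu a b : R) : R := (1 - nu) * a + nu * b.
Definition wgm (nu a b : R) : R := Rpower a (1 - nu) * Rpower b nu.

Definition wlm (nu a b : R) : R :=
  / (ln a - ln b) *
  ((1 - nu) / nu * (a - wgm nu a b) + nu / (1 - nu) * (wgm nu a b - b)).

Definition Kant (a b : R) : R := (a + b) ^ 2 / (4 * a * b).

Definition wim (nu a b : R) : R :=
  / exp 1 *
  Rpower (wam nu a b)
    ((1 - 2 * nu) * wam nu a b / (nu * (1 - nu) * (b - a))) *
  Rpower (Rpower b (nu * b / (1 - nu)) / Rpower a ((1 - nu) * a / nu))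
    (/ (b - a)).

Definition r1 (nu l : R) : R := Rmin (nu * l) (1 - nu * l).
Definition r2 (nu l : R) : R := Rmin ((1 - nu) * l) (1 - (1 - nu) * l).
Definition R1 (nu l : R) : R := Rmax (nu * l) (1 - nu * l).
Definition R2 (nu l : R) : R := Rmax ((1 - nu) * l) (1 - (1 - nu) * l).

Definition rtilde (nu : R) : R :=
  RInt (fun l => (1 - nu) * r1 nu l + nu * r2 nu l) 0 1.
Definition Rtilde (nu : R) : R :=
  RInt (fun l => (1 - nu) * R1 nu l + nu * R2 nu l) 0 1.

(* For t in [0,1] both f(t) = a∇_t b - a♯_t b and g(t) = ln (a∇_t b) - ln (a♯_t b)
   are Jensen gaps along a segment (of the convex exp, resp. the concave ln), so they
   are concave in t and vanish at t = 0 and t = 1.  Concavity alone then gives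
   2 min(t, 1-t) h(1/2) <= h(t) <= 2 max(t, 1-t) h(1/2), where 2 f(1/2) = (√a - √b)^2
   and 2 g(1/2) = ln K(a,b).  By the fundamental theorem of calculus, a∇_ν b - L_ν(a,b)
   and ln I_ν(a,b) - ln (a♯_ν b) are the integrals over λ in [0,1] of
   (1-ν) h(νλ) + ν h(1-(1-ν)λ) for h = f and h = g; integrating the pointwise bounds
   produces exactly r̃(ν) and R̃(ν). *)

From Stdlib Require Import Reals Lra.
From Coquelicot Require Import Coquelicot.
Open Scope R_scope.

Lemma exp_le_exp x y : x <= y -> exp x <= exp y.
Proof. intros [Hlt | ->]; [now apply Rlt_le, exp_increasing | apply Rle_refl]. Qed.

Lemma ln_le_inv x y : 0 < x -> 0 < y -> ln x <= ln y -> x <= y.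
Proof.
  intros Hx Hy Hle. rewrite <- (exp_ln x), <- (exp_ln y) by assumption.
  now apply exp_le_exp.
Qed.

Lemma ln_Rpower_mult k c g : 0 < g -> ln (Rpower k c * g) = c * ln k + ln g.
Proof. intros Hg. rewrite ln_mult, ln_Rpower by (try apply exp_pos; exact Hg). reflexivity. Qed.

(* Tangent lines at the barycenter m: [exp z >= exp m * (1 + (z - m))]. *)
Lemma exp_convex s u v : 0 <= s <= 1 ->
  exp ((1 - s) * u + s * v) <= (1 - s) * exp u + s * exp v.
Proof.
  intros Hs. set (m := (1 - s) * u + s * v).
  assert (Hu : exp m * (1 + (u - m)) <= exp u).
  { replace u with (m + (u - m)) at 2 by ring. rewrite exp_plus.
    apply Rmult_le_compat_l; [apply Rlt_le, exp_pos | apply exp_ineq1_le]. }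
  assert (Hv : exp m * (1 + (v - m)) <= exp v).
  { replace v with (m + (v - m)) at 2 by ring. rewrite exp_plus.
    apply Rmult_le_compat_l; [apply Rlt_le, exp_pos | apply exp_ineq1_le]. }
  assert (Hm : exp m = (1 - s) * (exp m * (1 + (u - m))) + s * (exp m * (1 + (v - m))))
    by (unfold m; ring).
  nra.
Qed.

Lemma ln_concave s x y : 0 <= s <= 1 -> 0 < x -> 0 < y ->
  (1 - s) * ln x + s * ln y <= ln (wam s x y).
Proof.
  intros Hs Hx Hy.
  assert (Hw : 0 < wam s x y) by (unfold wam; nra).
  rewrite <- (ln_exp ((1 - s) * ln x + s * ln y)).
  apply ln_le; [apply exp_pos |].
  unfold wam. rewrite <- (exp_ln x) at 2 by exact Hx. rewrite <- (exp_ln y) at 2 by exact Hy.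
  now apply exp_convex.
Qed.

Definition concave01 (h : R -> R) : Prop :=
  forall s x y, 0 <= s <= 1 -> 0 <= x <= 1 -> 0 <= y <= 1 ->
  (1 - s) * h x + s * h y <= h ((1 - s) * x + s * y).

Lemma concave01_compl h : concave01 h -> concave01 (fun t => h (1 - t)).
Proof.
  intros Hh s x y Hs Hx Hy.
  replace (1 - ((1 - s) * x + s * y)) with ((1 - s) * (1 - x) + s * (1 - y)) by ring.
  apply Hh; lra.
Qed.

Definition tmin (t : R) : R := Rmin t (1 - t).
Definition tmax (t : R) : R := Rmax t (1 - t).

Lemma tmin_compl t : tmin (1 - t) = tmin t.
Proof. unfold tmin. rewrite Rmin_comm. f_equal. ring. Qed.

Lemma tmax_compl t : tmax (1 - t) = tmax t.
Proof. unfold tmax. rewrite Rmax_comm. f_equal. ring. Qed.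

(* Interpolate [t] between [0] and [1/2] for the lower bound, and [1/2] between
   [t] and [1] for the upper bound. *)
Lemma concave01_gap_le_half h t : concave01 h -> h 0 = 0 -> h 1 = 0 -> 0 <= t <= 1/2 ->
  t * (2 * h (1/2)) <= h t <= (1 - t) * (2 * h (1/2)).
Proof.
  intros Hh H0 H1 Ht. split.
  - assert (H := Hh (2 * t) 0 (1/2) ltac:(lra) ltac:(lra) ltac:(lra)).
    rewrite H0 in H. replace ((1 - 2 * t) * 0 + 2 * t * (1/2)) with t in H by field.
    lra.
  - set (s := (1 - 2 * t) / (2 - 2 * t)).
    assert (Hs : s * (2 - 2 * t) = 1 - 2 * t) by (unfold s; field; lra).
    assert (H := Hh s t 1 ltac:(nra) ltac:(lra) ltac:(lra)).
    rewrite H1 in H. replace ((1 - s) * t + s * 1) with (1/2) in H by (unfold s; field; lra).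
    replace (h t) with ((2 - 2 * t) * ((1 - s) * h t + s * 0)) by (unfold s; field; lra).
    apply Rmult_le_compat_l with (r := 2 - 2 * t) in H; lra.
Qed.

Lemma concave01_gap_bounds h t : concave01 h -> h 0 = 0 -> h 1 = 0 -> 0 <= t <= 1 ->
  tmin t * (2 * h (1/2)) <= h t <= tmax t * (2 * h (1/2)).
Proof.
  intros Hh H0 H1 Ht. destruct (Rle_lt_dec t (1/2)) as [Hle | Hlt].
  - unfold tmin, tmax. rewrite Rmin_left, Rmax_right by lra.
    now apply concave01_gap_le_half.
  - rewrite <- tmin_compl, <- tmax_compl. unfold tmin, tmax.
    rewrite Rmin_left, Rmax_right by lra.
    assert (H0' : h (1 - 0) = 0) by now rewrite Rminus_0_r.
    assert (H1' : h (1 - 1) = 0) by now rewrite Rminus_diag.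
    assert (H := concave01_gap_le_half (fun u => h (1 - u)) (1 - t)
      (concave01_compl h Hh) H0' H1' ltac:(lra)).
    cbv beta in H. replace (1 - 1/2) with (1/2) in H by field.
    replace (1 - (1 - t)) with t in * by ring. exact H.
Qed.

Definition nu_mix (nu : R) (h : R -> R) (l : R) : R :=
  (1 - nu) * h (nu * l) + nu * h (1 - (1 - nu) * l).

Lemma nu_mix_le nu (h g : R -> R) l : 0 <= nu <= 1 -> 0 <= l <= 1 ->
  (forall t, 0 <= t <= 1 -> h t <= g t) -> nu_mix nu h l <= nu_mix nu g l.
Proof.
  intros Hnu Hl Hhg. unfold nu_mix.
  apply Rplus_le_compat; apply Rmult_le_compat_l; try lra; apply Hhg; nra.
Qed.

Lemma continuous_nu_mix nu (h : R -> R) l :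
  continuous h (nu * l) -> continuous h (1 - (1 - nu) * l) -> continuous (nu_mix nu h) l.
Proof.
  intros H1 H2.
  apply (continuous_plus (fun x => (1 - nu) * h (nu * x)) (fun x => nu * h (1 - (1 - nu) * x)));
    [apply (continuous_mult (fun _ => 1 - nu) (fun x => h (nu * x)))
    | apply (continuous_mult (fun _ => nu) (fun x => h (1 - (1 - nu) * x)))];
    try apply continuous_const; apply continuous_comp; try assumption;
    apply (ex_derive_continuous (K := R_AbsRing) (V := R_NormedModule)); auto_derive; exact I.
Qed.

Lemma tmin_abs t : tmin t = (1 - Rabs (1 - 2 * t)) / 2.
Proof.
  unfold tmin, Rmin. destruct (Rle_dec t (1 - t)).
  - rewrite Rabs_right by lra. field.
  - rewrite Rabs_left by lra. field.
Qed.

Lemma tmax_abs t : tmax t = (1 + Rabs (1 - 2 * t)) / 2.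
Proof.
  unfold tmax, Rmax. destruct (Rle_dec t (1 - t)).
  - rewrite Rabs_right by lra. field.
  - rewrite Rabs_left by lra. field.
Qed.

Lemma continuous_abs_affine (c d e : R) t :
  continuous (fun u => (c + d * Rabs (1 - 2 * u)) / e) t.
Proof.
  apply (continuous_comp (fun u => Rabs (1 - 2 * u)) (fun v => (c + d * v) / e)).
  - apply continuous_Rabs_comp, (ex_derive_continuous (K := R_AbsRing) (V := R_NormedModule)).
    auto_derive. exact I.
  - apply (ex_derive_continuous (K := R_AbsRing) (V := R_NormedModule)). auto_derive. exact I.
Qed.

Lemma continuous_tmin t : continuous tmin t.
Proof.
  apply (continuous_ext (fun u => (1 + -1 * Rabs (1 - 2 * u)) / 2)).
  - intros u. rewrite tmin_abs. f_equal. ring.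
  - apply continuous_abs_affine.
Qed.

Lemma continuous_tmax t : continuous tmax t.
Proof.
  apply (continuous_ext (fun u => (1 + 1 * Rabs (1 - 2 * u)) / 2)).
  - intros u. rewrite tmax_abs. f_equal. ring.
  - apply continuous_abs_affine.
Qed.

Lemma rtilde_nu_mix nu : rtilde nu = RInt (nu_mix nu tmin) 0 1.
Proof. apply RInt_ext. intros l _. unfold nu_mix. now rewrite tmin_compl. Qed.

Lemma Rtilde_nu_mix nu : Rtilde nu = RInt (nu_mix nu tmax) 0 1.
Proof. apply RInt_ext. intros l _. unfold nu_mix. now rewrite tmax_compl. Qed.

Lemma RInt_nu_mix_scal nu (h : R -> R) q : (forall t, continuous h t) ->
  RInt (nu_mix nu h) 0 1 * q = RInt (nu_mix nu (fun t => h t * q)) 0 1.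
Proof.
  intros Hh. rewrite Rmult_comm.
  assert (Hex : ex_RInt (nu_mix nu h) 0 1).
  { apply (@ex_RInt_continuous R_CompleteNormedModule). intros l _.
    apply continuous_nu_mix; apply Hh. }
  change (q * RInt (nu_mix nu h) 0 1) with (scal q (RInt (nu_mix nu h) 0 1)).
  rewrite <- (RInt_scal _ 0 1 q Hex).
  apply RInt_ext. intros l _.
  change (q * nu_mix nu h l = nu_mix nu (fun t => h t * q) l :> R). unfold nu_mix. ring.
Qed.

Lemma is_RInt_nu_mix_bounds nu (h : R -> R) q I : 0 <= nu <= 1 ->
  (forall t, 0 <= t <= 1 -> tmin t * q <= h t <= tmax t * q) ->
  is_RInt (nu_mix nu h) 0 1 I -> rtilde nu * q <= I <= Rtilde nu * q.
Proof.
  intros Hnu Hh HI.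
  assert (Hex : forall g : R -> R, (forall t, continuous g t) ->
    ex_RInt (nu_mix nu (fun t => g t * q)) 0 1).
  { intros g Hg. apply (@ex_RInt_continuous R_CompleteNormedModule). intros l _.
    apply continuous_nu_mix; apply (continuous_mult g (fun _ => q)); auto using continuous_const. }
  assert (HexI : ex_RInt (nu_mix nu h) 0 1) by (exists I; exact HI).
  rewrite <- (is_RInt_unique _ _ _ _ HI), rtilde_nu_mix, Rtilde_nu_mix,
    !RInt_nu_mix_scal by (apply continuous_tmin || apply continuous_tmax).
  split; apply RInt_le; auto using continuous_tmin, continuous_tmax; try lra;
    intros l Hl; apply nu_mix_le; try lra; intros t Ht; apply Hh, Ht.
Qed.

Lemma is_RInt_concave01_gap_bounds nu h I : 0 <= nu <= 1 ->
  concave01 h -> h 0 = 0 -> h 1 = 0 -> is_RInt (nu_mix nu h) 0 1 I ->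
  rtilde nu * (2 * h (1/2)) <= I <= Rtilde nu * (2 * h (1/2)).
Proof.
  intros Hnu Hh H0 H1. apply is_RInt_nu_mix_bounds; [exact Hnu |].
  intros t Ht. now apply concave01_gap_bounds.
Qed.

Lemma is_RInt_nu_mix nu (h P : R -> R) : 0 < nu < 1 ->
  (forall t, 0 <= t <= 1 -> is_derive P t (h t) /\ continuous h t) ->
  is_RInt (nu_mix nu h) 0 1
    ((1 - nu) / nu * (P nu - P 0) + nu / (1 - nu) * (P 1 - P nu)).
Proof.
  intros Hnu HP.
  set (F l := (1 - nu) / nu * P (nu * l) - nu / (1 - nu) * P (1 - (1 - nu) * l)).
  replace ((1 - nu) / nu * (P nu - P 0) + nu / (1 - nu) * (P 1 - P nu)) with (F 1 - F 0)
    by (unfold F; rewrite Rmult_1_r, Rmult_0_r, !Rmult_1_r, Rmult_0_r, Rminus_0_r;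
        replace (1 - (1 - nu)) with nu by ring; field; lra).
  apply (is_RInt_derive F).
  - intros l Hl. rewrite Rmin_left, Rmax_right in Hl by lra.
    destruct (HP (nu * l) ltac:(nra)) as [D1 _].
    destruct (HP (1 - (1 - nu) * l) ltac:(nra)) as [D2 _].
    unfold F, nu_mix. auto_derive.
    + split; [now exists (h (nu * l)) | split; [now exists (h (1 - (1 - nu) * l)) | exact I]].
    + change (fun x => P x) with P.
      replace (1 + - ((1 - nu) * l)) with (1 - (1 - nu) * l) by ring.
      rewrite (is_derive_unique _ _ _ D1), (is_derive_unique _ _ _ D2). field. lra.
  - intros l Hl. rewrite Rmin_left, Rmax_right in Hl by lra.
    apply continuous_nu_mix; apply HP; nra.
Qed.

Lemma wam_affine s x y a b :
  wam ((1 - s) * x + s * y) a b = wam s (wam x a b) (wam y a b).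
Proof. unfold wam. ring. Qed.

Lemma wam_pos t a b : 0 < a -> 0 < b -> 0 <= t <= 1 -> 0 < wam t a b.
Proof. intros Ha Hb Ht. unfold wam. nra. Qed.

Lemma wgm_exp t a b : wgm t a b = exp ((1 - t) * ln a + t * ln b).
Proof. unfold wgm, Rpower. now rewrite exp_plus. Qed.

Lemma ln_wgm t a b : ln (wgm t a b) = (1 - t) * ln a + t * ln b.
Proof. now rewrite wgm_exp, ln_exp. Qed.

Lemma wgm_pos t a b : 0 < wgm t a b.
Proof. rewrite wgm_exp. apply exp_pos. Qed.

Lemma wgm_0 a b : 0 < a -> wgm 0 a b = a.
Proof.
  intros Ha. rewrite wgm_exp, Rminus_0_r, Rmult_1_l, Rmult_0_l, Rplus_0_r.
  now apply exp_ln.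
Qed.

Lemma wgm_1 a b : 0 < b -> wgm 1 a b = b.
Proof.
  intros Hb. rewrite wgm_exp, Rminus_diag, Rmult_1_l, Rmult_0_l, Rplus_0_l.
  now apply exp_ln.
Qed.

Lemma wgm_half a b : 0 < a -> 0 < b -> wgm (1/2) a b = sqrt a * sqrt b.
Proof.
  intros Ha Hb. unfold wgm. replace (1 - 1/2) with (/2) by field.
  replace (1/2) with (/2) by field. now rewrite !Rpower_sqrt.
Qed.

Lemma wim_pos nu a b : 0 < wim nu a b.
Proof.
  unfold wim. repeat apply Rmult_lt_0_compat; try apply exp_pos.
  apply Rinv_0_lt_compat, exp_pos.
Qed.

Lemma ln_wim nu a b : ln (wim nu a b) =
  -1 + (1 - 2 * nu) * wam nu a b / (nu * (1 - nu) * (b - a)) * ln (wam nu a b)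
  + / (b - a) * (nu * b / (1 - nu) * ln b - (1 - nu) * a / nu * ln a).
Proof.
  assert (Hpow : forall x y, 0 < Rpower x y) by (intros; apply exp_pos).
  assert (He : 0 < / exp 1) by apply Rinv_0_lt_compat, exp_pos.
  unfold wim.
  rewrite ln_mult, ln_mult, ln_Rinv, ln_exp, !ln_Rpower, ln_div, !ln_Rpower;
    try apply Rmult_lt_0_compat; try apply Hpow; try apply exp_pos; try exact He.
  ring.
Qed.

Definition young_gap (a b t : R) : R := wam t a b - wgm t a b.
Definition log_young_gap (a b t : R) : R := ln (wam t a b) - ln (wgm t a b).

Lemma concave01_young_gap a b : concave01 (young_gap a b).
Proof.
  intros s x y Hs _ _. unfold young_gap. rewrite wam_affine, !wgm_exp.
  replace ((1 - ((1 - s) * x + s * y)) * ln a + ((1 - s) * x + s * y) * ln b)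
    with ((1 - s) * ((1 - x) * ln a + x * ln b) + s * ((1 - y) * ln a + y * ln b)) by ring.
  pose proof (exp_convex s ((1 - x) * ln a + x * ln b) ((1 - y) * ln a + y * ln b) Hs).
  change (wam s ?u ?v) with ((1 - s) * u + s * v). lra.
Qed.

Lemma concave01_log_young_gap a b : 0 < a -> 0 < b -> concave01 (log_young_gap a b).
Proof.
  intros Ha Hb s x y Hs Hx Hy. unfold log_young_gap. rewrite !ln_wgm, wam_affine.
  pose proof (ln_concave s _ _ Hs (wam_pos x a b Ha Hb Hx) (wam_pos y a b Ha Hb Hy)).
  lra.
Qed.

Lemma young_gap_0 a b : 0 < a -> young_gap a b 0 = 0.
Proof. intros Ha. unfold young_gap, wam. rewrite wgm_0 by exact Ha. ring. Qed.

Lemma young_gap_1 a b : 0 < b -> young_gap a b 1 = 0.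
Proof. intros Hb. unfold young_gap, wam. rewrite wgm_1 by exact Hb. ring. Qed.

Lemma log_young_gap_0 a b : log_young_gap a b 0 = 0.
Proof.
  unfold log_young_gap, wam. rewrite ln_wgm.
  replace ((1 - 0) * a + 0 * b) with a; ring.
Qed.

Lemma log_young_gap_1 a b : log_young_gap a b 1 = 0.
Proof.
  unfold log_young_gap, wam. rewrite ln_wgm.
  replace ((1 - 1) * a + 1 * b) with b; ring.
Qed.

Lemma young_gap_half a b : 0 < a -> 0 < b ->
  2 * young_gap a b (1/2) = (sqrt a - sqrt b) ^ 2.
Proof.
  intros Ha Hb. unfold young_gap, wam. rewrite wgm_half by assumption.
  pose proof (sqrt_sqrt a (Rlt_le _ _ Ha)). pose proof (sqrt_sqrt b (Rlt_le _ _ Hb)).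
  nra.
Qed.

Lemma log_young_gap_half a b : 0 < a -> 0 < b ->
  2 * log_young_gap a b (1/2) = ln (Kant a b).
Proof.
  intros Ha Hb. unfold log_young_gap, Kant. rewrite ln_wgm.
  replace ((a + b) ^ 2 / (4 * a * b)) with (wam (1/2) a b * wam (1/2) a b / (a * b))
    by (unfold wam; field; lra).
  assert (Hw : 0 < wam (1/2) a b) by (apply wam_pos; lra).
  rewrite ln_div, !ln_mult by nra. field.
Qed.

Lemma is_RInt_young_gap a b nu : 0 < a -> 0 < b -> a <> b -> 0 < nu < 1 ->
  is_RInt (nu_mix nu (young_gap a b)) 0 1 (wam nu a b - wlm nu a b).
Proof.
  intros Ha Hb Hab Hnu.
  assert (Hd : ln b - ln a <> 0) by (intros H; apply Hab, ln_inv; lra).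
  set (P t := a * t + (b - a) * t ^ 2 / 2 - wgm t a b / (ln b - ln a)).
  replace (wam nu a b - wlm nu a b)
    with ((1 - nu) / nu * (P nu - P 0) + nu / (1 - nu) * (P 1 - P nu)).
  2: { unfold P, wlm, wam. rewrite wgm_0, wgm_1 by assumption. field. lra. }
  apply is_RInt_nu_mix; [exact Hnu |]. intros t _. split.
  - unfold P, young_gap, wam. rewrite wgm_exp.
    apply (is_derive_ext (fun t => a * t + (b - a) * t ^ 2 / 2
      - exp ((1 - t) * ln a + t * ln b) / (ln b - ln a))).
    { intros u. now rewrite wgm_exp. }
    auto_derive; [exact I |].
    replace (1 + - t) with (1 - t) by ring. field. exact Hd.
  - apply (continuous_ext (fun t => wam t a b - exp ((1 - t) * ln a + t * ln b))).
    { intros u. unfold young_gap. now rewrite wgm_exp. }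
    apply (ex_derive_continuous (K := R_AbsRing) (V := R_NormedModule)).
    unfold wam. auto_derive. exact I.
Qed.

Lemma is_RInt_log_young_gap a b nu : 0 < a -> 0 < b -> a <> b -> 0 < nu < 1 ->
  is_RInt (nu_mix nu (log_young_gap a b)) 0 1 (ln (wim nu a b) - ln (wgm nu a b)).
Proof.
  intros Ha Hb Hab Hnu.
  assert (Hd : b - a <> 0) by lra.
  set (P t := (wam t a b * ln (wam t a b) - wam t a b) / (b - a)
              - (t * ln a + t ^ 2 * (ln b - ln a) / 2)).
  replace (ln (wim nu a b) - ln (wgm nu a b))
    with ((1 - nu) / nu * (P nu - P 0) + nu / (1 - nu) * (P 1 - P nu)).
  2: { unfold P. rewrite ln_wim, ln_wgm. unfold wam.
       replace ((1 - 0) * a + 0 * b) with a by ring.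
       replace ((1 - 1) * a + 1 * b) with b by ring.
       field. lra. }
  apply is_RInt_nu_mix; [exact Hnu |]. intros t Ht.
  pose proof (wam_pos t a b Ha Hb Ht) as Hw. unfold wam in Hw. split.
  - unfold P, log_young_gap. rewrite ln_wgm. unfold wam. auto_derive.
    + repeat split; lra.
    + replace (1 + - t) with (1 - t) by ring. field. lra.
  - apply (continuous_ext (fun t => ln (wam t a b) - ((1 - t) * ln a + t * ln b))).
    { intros u. unfold log_young_gap. now rewrite ln_wgm. }
    apply (ex_derive_continuous (K := R_AbsRing) (V := R_NormedModule)).
    unfold wam. auto_derive. lra.
Qed.

Theorem corollary2p20 (a b nu : R) :
  0 < a -> 0 < b -> a <> b -> 0 < nu < 1 ->
  (rtilde nu * (sqrt a - sqrt b) ^ 2 <= wam nu a b - wlm nu a b <=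
     Rtilde nu * (sqrt a - sqrt b) ^ 2) /\
  (Rpower (Kant a b) (rtilde nu) * wgm nu a b <= wim nu a b <=
     Rpower (Kant a b) (Rtilde nu) * wgm nu a b).
Proof.
  intros Ha Hb Hab Hnu. split.
  - rewrite <- young_gap_half by assumption.
    apply is_RInt_concave01_gap_bounds; auto using young_gap_0, young_gap_1.
    + lra.
    + apply concave01_young_gap.
    + now apply is_RInt_young_gap.
  - assert (Hln : rtilde nu * ln (Kant a b) <= ln (wim nu a b) - ln (wgm nu a b)
                  <= Rtilde nu * ln (Kant a b)).
    { rewrite <- log_young_gap_half by assumption.
      apply is_RInt_concave01_gap_bounds; auto using log_young_gap_0, log_young_gap_1.
      + lra.
      + now apply concave01_log_young_gap.
      + now apply is_RInt_log_young_gap. }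
    assert (Hscaled : forall c, 0 < Rpower (Kant a b) c * wgm nu a b)
      by (intros c; apply Rmult_lt_0_compat; [apply exp_pos | apply wgm_pos]).
    split; apply ln_le_inv; auto using wim_pos;
      rewrite ln_Rpower_mult by apply wgm_pos; lra.
Qed.
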